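(* Let $R$ be a positive random variable such that $e^R$ has infinite upper endpoint and lies in the Gumbel max-domain of attraction with scaling function $e$. Let $\lambda,\beta>0$, let $\gamma_u>0$ with $\gamma_u\to\gamma\in(0,\infty)$, and let $k>d$ be a constant. Then, as $u\to\infty$, $$\int_0^{1-\log(k)/\log u}\mathbb P\big(\lambda e^{R\theta\beta\gamma_u}>u/d\big)f(\theta)\,d\theta=o\!\left(\Big(\frac{e^*(u)}{u\log u}\Big)^{\frac{d-1}{2}}\mathbb P\big(\lambda e^{R\beta\gamma_u}>u\big)\right).$$
   Context: $d\ge2$ is an integer and $f(\theta)=\frac{\Gamma(d/2)}{\sqrt\pi\,\Gamma((d-1)/2)}(1-\theta^2)^{(d-3)/2}$, $\theta\in(-1,1)$. Gumbel max-domain of attraction with scaling function $e$ means $\lim_{t\to\infty}\mathbb P(e^R>t+xe(t))/\mathbb P(e^R>t)=e^{-x}$ for all real $x$. Define $e^*(u)=\beta\gamma_u\,u\,e(w(u))/w(u)$ with $w(u)=(u/\lambda)^{1/(\beta\gamma_u)}$. *)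

From Stdlib Require Import Reals Lra.
Open Scope R_scope.

(* The law of the positive random variable R is represented by its survival
   function S x = P(R > x). *)
Definition is_survival_of_positive_rv (S : R -> R) : Prop :=
  (forall x, 0 <= S x <= 1) /\
  (forall x y, x <= y -> S y <= S x) /\
  (forall x eps, 0 < eps -> exists delta, 0 < delta /\
      forall y, x < y < x + delta -> Rabs (S y - S x) < eps) /\
  (forall eps, 0 < eps -> exists M, forall x, M < x -> S x < eps) /\
  S 0 = 1.   (* P(R > 0) = 1 : R is positive *)

(* P(e^R > y) *)
Definition tail_expR (S : R -> R) (y : R) : R :=
  if Rlt_dec 0 y then S (ln y) else 1.

Definition infinite_upper_endpoint_expR (S : R -> R) : Prop :=
  forall y, 0 < tail_expR S y.

Definition gumbel_MDA_expR (S : R -> R) (e : R -> R) : Prop :=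
  forall x eps, 0 < eps -> exists T, forall t, T < t ->
    Rabs (tail_expR S (t + x * e t) / tail_expR S t - exp (- x)) < eps.

(* P(lam * exp(R * c) > v), for lam > 0 and c >= 0
   (only c >= 0 is ever used; the value for c < 0 is an irrelevant filler). *)
Definition prob_lam_exp_gt (S : R -> R) (lam c v : R) : R :=
  if Rle_dec v 0 then 1
  else if Rlt_dec 0 c then S (ln (v / lam) / c)
  else if Req_EM_T c 0 then (if Rlt_dec v lam then 1 else 0)
  else 0.

(* Gamma(n/2) for n >= 1 : Gamma(1/2) = sqrt pi, Gamma(1) = 1,
   Gamma(s+1) = s Gamma(s).  (n = 0 is a pole; filler value.) *)
Fixpoint gamma_half (n : nat) : R :=
  match n with
  | O => 0
  | S O => sqrt PI
  | S (S O) => 1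
  | S (S m as p) => (INR m / 2) * gamma_half m
  end.

Definition f_dens (d : nat) (theta : R) : R :=
  gamma_half d / (sqrt PI * gamma_half (d - 1))
  * Rpower (1 - theta ^ 2) ((INR d - 3) / 2).

Definition w_fun (lam beta : R) (gam : R -> R) (u : R) : R :=
  Rpower (u / lam) (1 / (beta * gam u)).

Definition e_star (e : R -> R) (lam beta : R) (gam : R -> R) (u : R) : R :=
  beta * gam u * u * e (w_fun lam beta gam u) / w_fun lam beta gam u.

(* The integrand is [P(R > L / (theta b)) f(theta)] with [b = beta gamma_u] and
   [L = ln (u / (d lam))], while [P(lam e^(R b) > u) = P(e^R > w)] with [w = w(u)].
   Iterating the Gumbel property along [t -> t + x e(t)], on which [e] at most doubles while
   the tail of [e^R] drops by a fixed factor, gives the polynomial decay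
   [P(e^R > t + D) <= K (e(t) / D)^d P(e^R > t)].  For [theta <= 1 - ln k / ln u] the level
   [exp (L / (theta b))] exceeds [w] by at least [w eta L (1 - theta) / b], because [k > d];
   so with [a = e*(u) / u = b e(w) / w] the integrand is at most
   [C a^d (ln u)^(-d) (1 - theta)^(-(d+3)/2) P(e^R > w)], whose integral is of order
   [a^d (ln u)^(-(d-1)/2) P(e^R > w)].  This is the target [(a / ln u)^((d-1)/2) P(e^R > w)]
   times [a^((d+1)/2)], and [a -> 0] because [e(t) = o(t)]. *)

From Stdlib Require Import Reals Lra Lia RList RiemannInt_SF RiemannInt.
From Coquelicot Require Import Coquelicot.
Open Scope R_scope.

Lemma exp_le x y : x <= y -> exp x <= exp y.
Proof. intros [Hlt | ->]; [now apply Rlt_le, exp_increasing | lra]. Qed.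

(** * Riemann integrability of monotone functions *)

Fixpoint left_step (n : nat) (x h : R) (f : R -> R) (t : R) : R :=
  match n with
  | O => f x
  | S n' => if Rle_dec t (x + h) then f x else left_step n' (x + h) h f t
  end.

Fixpoint unif_points (n : nat) (x h : R) : list R :=
  match n with
  | O => x :: (x + h) :: nil
  | S n' => x :: unif_points n' (x + h) h
  end.

Fixpoint left_values (n : nat) (x h : R) (f : R -> R) : list R :=
  match n with
  | O => f x :: nil
  | S n' => f x :: left_values n' (x + h) h f
  end.

Lemma unif_points_length n x h : length (unif_points n x h) = S (S n).
Proof. revert x; induction n; intros; simpl; auto. Qed.

Lemma left_values_length n x h f : length (left_values n x h f) = S n.
Proof. revert x; induction n; intros; simpl; auto. Qed.

Lemma unif_points_last n x h : pos_Rl (unif_points n x h) (S n) = x + INR (S n) * h.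
Proof.
  revert x; induction n; intros x; simpl.
  - ring.
  - destruct n; simpl in *; rewrite IHn; ring.
Qed.

Lemma unif_points_ge n x h :
  0 <= h -> forall i, (i <= S n)%nat -> x <= pos_Rl (unif_points n x h) i.
Proof.
  revert x; induction n; intros x Hh i Hi; simpl.
  - destruct i as [|[|i]]; simpl; [lra | lra | lia].
  - destruct i; [lra|].
    apply Rle_trans with (x + h); [lra | apply IHn; [lra | lia]].
Qed.

Lemma unif_points_ordered n x h : 0 <= h -> ordered_Rlist (unif_points n x h).
Proof.
  revert x; induction n; intros x Hh i Hi; rewrite unif_points_length in Hi; simpl.
  - destruct i; simpl; [lra | lia].
  - destruct i.
    + destruct n; simpl; lra.
    + apply IHn; auto. rewrite unif_points_length; simpl in *; lia.
Qed.

Lemma left_step_constant n x h f : 0 < h -> forall i, (i < S n)%nat ->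
  constant_D_eq (left_step n x h f)
    (open_interval (pos_Rl (unif_points n x h) i) (pos_Rl (unif_points n x h) (S i)))
    (pos_Rl (left_values n x h f) i).
Proof.
  revert x; induction n; intros x Hh i Hi t Ht; unfold open_interval in Ht.
  - destruct i; [reflexivity | lia].
  - simpl in Ht |- *. destruct (Rle_dec t (x + h)) as [Hle | Hgt]; destruct i.
    + reflexivity.
    + assert (x + h <= pos_Rl (unif_points n (x + h) h) i) by (apply unif_points_ge; [lra | lia]).
      lra.
    + destruct n; simpl in Ht; lra.
    + apply IHn; auto; lia.
Qed.

Lemma left_step_adapted n a b h f : 0 < h -> b = a + INR (S n) * h ->
  adapted_couple (left_step n a h f) a b (unif_points n a h) (left_values n a h f).
Proof.
  intros Hh Hb.
  assert (a <= b) by (subst b; pose proof (pos_INR (S n)); nra).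
  repeat split.
  - apply unif_points_ordered; lra.
  - rewrite Rmin_left by lra. destruct n; reflexivity.
  - rewrite Rmax_right, unif_points_length by lra. simpl pred. now rewrite unif_points_last.
  - now rewrite unif_points_length, left_values_length.
  - intros i Hi. rewrite unif_points_length in Hi. apply left_step_constant; auto.
Qed.

Definition left_step_fun n a b h f (Hh : 0 < h) (Hb : b = a + INR (S n) * h) : StepFun a b :=
  mkStepFun (existT _ (unif_points n a h)
    (existT _ (left_values n a h f) (left_step_adapted n a b h f Hh Hb))).

Lemma Int_SF_left_values_increments n x h f :
  Int_SF (left_values n x h (fun y => f (y + h) - f y)) (unif_points n x h)
  = h * (f (x + INR (S n) * h) - f x).
Proof.
  revert x; induction n; intros x.
  - simpl. replace (x + 1 * h) with (x + h) by ring. ring.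
  - assert (Hstep : forall l, Int_SF (left_values (S n) x h l) (unif_points (S n) x h)
        = l x * (x + h - x) + Int_SF (left_values n (x + h) h l) (unif_points n (x + h) h))
      by (intros l; destruct n; reflexivity).
    rewrite Hstep, IHn, (S_INR (S n)).
    replace (x + h + INR (S n) * h) with (x + (INR (S n) + 1) * h) by ring.
    ring.
Qed.

Lemma left_step_error n x h f : 0 < h ->
  (forall s t, x <= s -> s <= t -> t <= x + INR (S n) * h -> f s <= f t) ->
  forall t, x <= t <= x + INR (S n) * h ->
  Rabs (f t - left_step n x h f t) <= left_step n x h (fun y => f (y + h) - f y) t.
Proof.
  revert x; induction n; intros x Hh Hf t Ht; cbn [left_step].
  - change (INR 1) with 1 in *. rewrite Rmult_1_l in *.
    assert (f x <= f t) by (apply Hf; lra). assert (f t <= f (x + h)) by (apply Hf; lra).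
    rewrite Rabs_right; lra.
  - rewrite (S_INR (S n)) in Hf, Ht. pose proof (pos_INR (S n)).
    destruct (Rle_dec t (x + h)).
    + assert (f x <= f t) by (apply Hf; nra). assert (f t <= f (x + h)) by (apply Hf; nra).
      rewrite Rabs_right; lra.
    + apply IHn; auto.
      * intros s t' ? ? ?; apply Hf; nra.
      * nra.
Qed.

(* On each cell the oscillation is at most [f (y + h) - f y], whose step integral telescopes
   to [h (f b - f a)]. *)
Lemma Riemann_integrable_nondecreasing (f : R -> R) (a b : R) : a < b ->
  (forall s t, a <= s -> s <= t -> t <= b -> f s <= f t) -> Riemann_integrable f a b.
Proof.
  intros Hab Hf eps.
  assert (Hfab : f a <= f b) by (apply Hf; lra).
  assert (Hr : 0 <= (b - a) * (f b - f a) / eps)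
    by (apply Rmult_le_pos; [nra | apply Rlt_le, Rinv_0_lt_compat, cond_pos]).
  destruct (nfloor_ex _ Hr) as [n [_ Hn]].
  assert (HSn : 0 < INR (S n)) by (apply lt_0_INR; lia).
  set (h := (b - a) / INR (S n)).
  assert (Hh : 0 < h) by (unfold h; apply Rdiv_lt_0_compat; lra).
  assert (Hb : b = a + INR (S n) * h) by (unfold h; field; lra).
  exists (left_step_fun n a b h f Hh Hb).
  exists (left_step_fun n a b h (fun y => f (y + h) - f y) Hh Hb).
  split.
  - intros t Ht. rewrite Rmin_left, Rmax_right in Ht by lra.
    apply left_step_error; [auto | intros; apply Hf | ]; lra.
  - unfold RiemannInt_SF. destruct (Rle_dec a b); [|lra].
    unfold subdivision_val, subdivision; simpl.
    rewrite Int_SF_left_values_increments, <- Hb, Rabs_right by (apply Rle_ge, Rmult_le_pos; lra).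
    assert (Hsmall : (b - a) * (f b - f a) < eps * INR (S n)).
    { rewrite S_INR. pose proof (cond_pos eps).
      apply Rmult_lt_compat_r with (r := eps) in Hn; [|auto].
      unfold Rdiv in Hn. rewrite Rmult_assoc, Rinv_l in Hn by lra. nra. }
    unfold h. apply Rmult_lt_reg_r with (INR (S n)); auto.
    replace ((b - a) / INR (S n) * (f b - f a) * INR (S n)) with ((b - a) * (f b - f a))
      by (field; lra).
    lra.
Qed.

Lemma Riemann_integrable_mult_nondecreasing (g h : R -> R) (a b : R) : a < b ->
  (forall s t, a <= s -> s <= t -> t <= b -> 0 <= g s <= g t) ->
  (forall s t, a <= s -> s <= t -> t <= b -> 0 <= h s <= h t) ->
  Riemann_integrable (fun x => g x * h x) a b.
Proof.
  intros Hab Hg Hh. apply Riemann_integrable_nondecreasing; [auto|].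
  intros s t Hs Hst Ht. specialize (Hg s t Hs Hst Ht). specialize (Hh s t Hs Hst Ht).
  apply Rmult_le_compat; lra.
Qed.

(* [g h = h a * g - g (h a - h)], a difference of two nondecreasing products. *)
Lemma Riemann_integrable_mult_nonincreasing (g h : R -> R) (a b : R) : a < b ->
  (forall s t, a <= s -> s <= t -> t <= b -> 0 <= g s <= g t) ->
  (forall s t, a <= s -> s <= t -> t <= b -> 0 <= h t <= h s) ->
  Riemann_integrable (fun x => g x * h x) a b.
Proof.
  intros Hab Hg Hh.
  apply (Riemann_integrable_ext (fun x => h a * g x - g x * (h a - h x))); [intros; ring|].
  apply Riemann_integrable_minus.
  - apply Riemann_integrable_scal, Riemann_integrable_nondecreasing; [auto|].
    intros s t ? ? ?; apply Hg; auto.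
  - apply Riemann_integrable_mult_nondecreasing; auto.
    intros s t Hs Hst Ht.
    assert (h s <= h a) by (apply Hh; lra). assert (h t <= h s) by (apply Hh; lra). lra.
Qed.

(** * The density [f] *)

Definition dens_exp (d : nat) : R := (INR d - 3) / 2.

Definition dens_const (d : nat) : R :=
  Rabs (gamma_half d / (sqrt PI * gamma_half (d - 1))) * exp (Rabs (dens_exp d)).

Lemma dens_const_nonneg d : 0 <= dens_const d.
Proof. apply Rmult_le_pos; [apply Rabs_pos | apply Rlt_le, exp_pos]. Qed.

(* [1 - th^2 = (1 - th) (1 + th)] and [|p ln (1 + th)| <= |p|]. *)
Lemma f_dens_le d th : 0 <= th < 1 ->
  Rabs (f_dens d th) <= dens_const d * Rpower (1 - th) (dens_exp d).
Proof.
  intros Hth. unfold f_dens, dens_const, Rpower. fold (dens_exp d). set (p := dens_exp d).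
  rewrite Rabs_mult, (Rabs_right (exp _)) by (apply Rle_ge, Rlt_le, exp_pos).
  rewrite Rmult_assoc, <- exp_plus. apply Rmult_le_compat_l; [apply Rabs_pos|]. apply exp_le.
  replace (1 - th ^ 2) with ((1 - th) * (1 + th)) by ring. rewrite ln_mult by lra.
  assert (0 <= ln (1 + th)) by (rewrite <- ln_1; apply ln_le; lra).
  assert (ln (1 + th) <= th).
  { rewrite <- (ln_exp th) at 2. apply ln_le; [lra | apply exp_ineq1_le]. }
  assert (p * ln (1 + th) <= Rabs p).
  { destruct (Rle_dec 0 p); [rewrite Rabs_right by lra | rewrite Rabs_left by lra]; nra. }
  lra.
Qed.

Lemma Rpower_one_minus_sq_nondecreasing p s t : p <= 0 -> 0 <= s -> s <= t -> t < 1 ->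
  Rpower (1 - s ^ 2) p <= Rpower (1 - t ^ 2) p.
Proof.
  intros. apply exp_le. assert (ln (1 - t ^ 2) <= ln (1 - s ^ 2)) by (apply ln_le; nra). nra.
Qed.

Lemma Rpower_one_minus_sq_nonincreasing p s t : 0 <= p -> 0 <= s -> s <= t -> t < 1 ->
  Rpower (1 - t ^ 2) p <= Rpower (1 - s ^ 2) p.
Proof.
  intros. apply exp_le. assert (ln (1 - t ^ 2) <= ln (1 - s ^ 2)) by (apply ln_le; nra). nra.
Qed.

Lemma Riemann_integrable_mult_f_dens (g : R -> R) (d : nat) (tm : R) : 0 < tm < 1 ->
  (forall s t, 0 <= s -> s <= t -> t <= tm -> 0 <= g s <= g t) ->
  Riemann_integrable (fun x => g x * f_dens d x) 0 tm.
Proof.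
  intros Htm Hg. set (p := dens_exp d).
  set (Cf := gamma_half d / (sqrt PI * gamma_half (d - 1))).
  apply (Riemann_integrable_ext (fun x => Cf * (g x * Rpower (1 - x ^ 2) p)));
    [intros; unfold f_dens, Cf, p, dens_exp; ring |].
  apply Riemann_integrable_scal.
  assert (Hpos : forall x, 0 <= Rpower (1 - x ^ 2) p) by (intros; apply Rlt_le, exp_pos).
  destruct (Rle_dec p 0) as [Hp | Hp].
  - apply Riemann_integrable_mult_nondecreasing; [lra | auto |].
    intros s t ? ? ?; split; [auto | apply Rpower_one_minus_sq_nondecreasing; lra].
  - apply Riemann_integrable_mult_nonincreasing; [lra | auto |].
    intros s t ? ? ?; split; [auto | apply Rpower_one_minus_sq_nonincreasing; lra].
Qed.

(** * The law of [e^R] *)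

Section Survival.
Variable Sbar : R -> R.
Hypothesis hS : is_survival_of_positive_rv Sbar.
Local Notation G := (tail_expR Sbar).

Lemma tail_expR_bounds y : 0 <= G y <= 1.
Proof. destruct hS as [H01 _]. unfold tail_expR. destruct (Rlt_dec 0 y); [auto | lra]. Qed.

Lemma tail_expR_nonincreasing y1 y2 : y1 <= y2 -> G y2 <= G y1.
Proof.
  destruct hS as [H01 [Hmono _]]. intros Hy. unfold tail_expR.
  destruct (Rlt_dec 0 y2), (Rlt_dec 0 y1); try lra.
  - apply Hmono, ln_le; lra.
  - apply H01.
Qed.

Lemma tail_expR_nonpos y : y <= 0 -> G y = 1.
Proof. intros Hy. unfold tail_expR. destruct (Rlt_dec 0 y); [lra | auto]. Qed.

Lemma tail_expR_exp x : G (exp x) = Sbar x.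
Proof.
  unfold tail_expR. destruct (Rlt_dec 0 (exp x)) as [_ | Hn].
  - now rewrite ln_exp.
  - exfalso; apply Hn, exp_pos.
Qed.

Lemma tail_expR_vanishes eps : 0 < eps -> exists T, forall t, T < t -> G t < eps.
Proof.
  destruct hS as [_ [_ [_ [Hlim _]]]]. intros Heps.
  destruct (Hlim eps Heps) as [M HM]. exists (exp M). intros t Ht.
  pose proof (exp_pos M). unfold tail_expR. destruct (Rlt_dec 0 t); [|lra].
  apply HM. rewrite <- (ln_exp M). now apply ln_increasing.
Qed.

Lemma prob_lam_exp_gt_pos_rate lam c v : 0 < c -> 0 < v ->
  prob_lam_exp_gt Sbar lam c v = Sbar (ln (v / lam) / c).
Proof.
  intros Hc Hv. unfold prob_lam_exp_gt.
  destruct (Rle_dec v 0); [lra|]. destruct (Rlt_dec 0 c); [auto | lra].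
Qed.

Lemma prob_lam_exp_gt_as_tail lam c v : 0 < lam -> 0 < c -> 0 < v ->
  prob_lam_exp_gt Sbar lam c v = G (Rpower (v / lam) (1 / c)).
Proof.
  intros Hlam Hc Hv. rewrite prob_lam_exp_gt_pos_rate by auto.
  unfold Rpower. rewrite tail_expR_exp. f_equal. field. lra.
Qed.

Lemma prob_lam_exp_gt_nondecreasing lam v c1 c2 : 0 < lam < v -> 0 <= c1 -> c1 <= c2 ->
  0 <= prob_lam_exp_gt Sbar lam c1 v <= prob_lam_exp_gt Sbar lam c2 v.
Proof.
  destruct hS as [H01 [Hmono _]]. intros Hv Hc1 Hc12.
  assert (Hlv : 0 < ln (v / lam)).
  { rewrite ln_div by lra. pose proof (ln_increasing lam v). lra. }
  destruct (Req_dec c1 0) as [-> | Hc1'].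
  - assert (H0 : prob_lam_exp_gt Sbar lam 0 v = 0).
    { unfold prob_lam_exp_gt. destruct (Rle_dec v 0); [lra|]. destruct (Rlt_dec 0 0); [lra|].
      destruct (Req_EM_T 0 0) as [_ | []]; [|auto]. destruct (Rlt_dec v lam); lra. }
    rewrite H0. split; [lra|].
    destruct (Req_dec c2 0) as [-> | Hc2]; [lra|].
    rewrite prob_lam_exp_gt_pos_rate by lra. apply H01.
  - rewrite !prob_lam_exp_gt_pos_rate by lra. split; [apply H01|].
    apply Hmono. unfold Rdiv. apply Rmult_le_compat_l; [lra|].
    apply Rinv_le_contravar; lra.
Qed.

End Survival.

(** * Consequences of the Gumbel domain of attraction *)

Lemma pow2_bracket r : 1 <= r -> exists n, 2 ^ n <= r < 2 ^ S n.
Proof.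
  assert (Hbelow : forall N, 1 <= r -> r < 2 ^ N -> exists n, 2 ^ n <= r < 2 ^ S n).
  { induction N; intros H1 H2; simpl in H2; [lra|].
    destruct (Rlt_dec r (2 ^ N)); [now apply IHN | exists N; split; simpl; lra]. }
  intros Hr. destruct (INR_unbounded r) as [N HN].
  apply (Hbelow N Hr). apply Rlt_le_trans with (INR N); [lra|].
  clear. induction N; [simpl; lra|]. rewrite S_INR. simpl.
  assert (1 <= 2 ^ N) by (apply pow_R1_Rle; lra). lra.
Qed.

Section Gumbel.
Variables Sbar e : R -> R.
Hypothesis hS : is_survival_of_positive_rv Sbar.
Hypothesis hinf : infinite_upper_endpoint_expR Sbar.
Hypothesis hgum : gumbel_MDA_expR Sbar e.
Hypothesis he_pos : forall t, 0 < e t.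
Local Notation G := (tail_expR Sbar).

Lemma gumbel_tail_le x eps : 0 < eps ->
  exists T, forall t, T < t -> G (t + x * e t) <= (exp (- x) + eps) * G t.
Proof.
  intros Heps. destruct (hgum x eps Heps) as [T HT]. exists T. intros t Ht.
  specialize (HT t Ht). pose proof (hinf t) as HGt. apply Rabs_def2 in HT.
  assert (Hratio : G (t + x * e t) / G t <= exp (- x) + eps) by lra.
  unfold Rdiv in Hratio. apply Rmult_le_compat_r with (r := G t) in Hratio; [|lra].
  rewrite Rmult_assoc, Rinv_l, Rmult_1_r in Hratio by lra. exact Hratio.
Qed.

(* If [e t > delta t], then [t - e t / delta < 0], so the Gumbel ratio at [x = - 1 / delta]
   would force [G t >= 1 / (exp (1 / delta) + 1)], contradicting [G t -> 0]. *)
Lemma gumbel_scale_little_o delta : 0 < delta ->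
  exists T, forall t, T < t -> e t <= delta * t.
Proof.
  intros Hdelta. set (c := exp (- - / delta) + 1).
  assert (Hc : 0 < c) by (unfold c; pose proof (exp_pos (- - / delta)); lra).
  destruct (gumbel_tail_le (- / delta) 1 Rlt_0_1) as [T1 HT1].
  destruct (tail_expR_vanishes Sbar hS (/ c)) as [T2 HT2]; [now apply Rinv_0_lt_compat|].
  exists (Rmax 0 (Rmax T1 T2)). intros t Ht.
  apply Rmax_Rlt in Ht as [Ht0 Ht]. apply Rmax_Rlt in Ht as [Ht1 Ht2].
  destruct (Rle_dec (e t) (delta * t)) as [|Hbig]; [auto | exfalso].
  assert (Hneg : t + - / delta * e t <= 0).
  { apply Rnot_le_lt in Hbig. apply Rmult_lt_compat_l with (r := / delta) in Hbig;
      [|now apply Rinv_0_lt_compat].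
    rewrite <- Rmult_assoc, Rinv_l, Rmult_1_l in Hbig by lra. lra. }
  specialize (HT1 t Ht1). specialize (HT2 t Ht2).
  rewrite tail_expR_nonpos in HT1 by auto. fold c in HT1.
  apply Rmult_lt_compat_l with (r := c) in HT2; [|auto]. rewrite Rinv_r in HT2 by lra. lra.
Qed.

(* With [r = exp (- x / 2) <= 1/4], a jump [e s > 2 e t] at [s = t + x e t] would give
   [G t <= G (s - x/2 e s) <= (1/r + 1) G s <= (1/r + 1) 2 r^2 G t < G t]. *)
Lemma gumbel_scale_doubling x : 4 <= exp (x / 2) ->
  exists T, forall t, T < t -> e (t + x * e t) <= 2 * e t.
Proof.
  intros Hx. set (r := exp (- (x / 2))).
  assert (Hr : 0 < r <= / 4).
  { split; [apply exp_pos|]. unfold r. rewrite exp_Ropp. apply Rinv_le_contravar; lra. }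
  assert (Hx0 : 0 < x).
  { apply Rnot_le_lt. intros Hx0. assert (exp (x / 2) <= exp 0) by (apply exp_le; lra).
    rewrite exp_0 in *; lra. }
  assert (Hrx : exp (- x) = r * r) by (unfold r; rewrite <- exp_plus; f_equal; field).
  assert (Hrx2 : exp (- - (x / 2)) * r = 1)
    by (unfold r; rewrite <- exp_plus, <- exp_0; f_equal; ring).
  destruct (gumbel_tail_le x (exp (- x)) (exp_pos _)) as [T1 HT1].
  destruct (gumbel_tail_le (- (x / 2)) 1 Rlt_0_1) as [T2 HT2].
  exists (Rmax T1 T2). intros t Ht. apply Rmax_Rlt in Ht as [Ht1 Ht2].
  destruct (Rle_dec (e (t + x * e t)) (2 * e t)) as [|Hjump]; [auto | exfalso].
  set (s := t + x * e t) in *.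
  pose proof (he_pos t). pose proof (hinf t).
  assert (Hs : T2 < s) by (unfold s; nra).
  assert (Hback : s + - (x / 2) * e s <= t) by (unfold s in *; nra).
  specialize (HT1 t Ht1). specialize (HT2 s Hs). fold s in HT1.
  pose proof (tail_expR_nonincreasing Sbar hS _ _ Hback).
  assert (G t <= (exp (- - (x / 2)) + 1) * (2 * (r * r)) * G t).
  { rewrite Hrx in HT1.
    apply Rle_trans with ((exp (- - (x / 2)) + 1) * G s); [lra|].
    rewrite Rmult_assoc. apply Rmult_le_compat_l; [pose proof (exp_pos (- - (x / 2))); lra | lra]. }
  assert ((exp (- - (x / 2)) + 1) * (2 * (r * r)) = 2 * r + 2 * r * r) by nra.
  assert (2 * r + 2 * r * r < 1) by nra.
  nra.
Qed.

Lemma gumbel_tail_geometric x q T : 0 < x -> 0 <= q ->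
  (forall t, T < t -> e (t + x * e t) <= 2 * e t) ->
  (forall t, T < t -> G (t + x * e t) <= q * G t) ->
  forall n t, T < t -> G (t + x * e t * (2 ^ n - 1)) <= q ^ n * G t.
Proof.
  intros Hx Hq Hdouble Hstep n. induction n as [|n IH]; intros t Ht.
  - replace (t + x * e t * (2 ^ 0 - 1)) with t by (simpl; ring). simpl; lra.
  - set (t' := t + x * e t).
    pose proof (he_pos t). pose proof (Hdouble t Ht) as Hd. fold t' in Hd.
    assert (Ht' : T < t') by (unfold t'; nra).
    assert (Hfar : t' + x * e t' * (2 ^ n - 1) <= t + x * e t * (2 ^ S n - 1)).
    { assert (1 <= 2 ^ n) by (apply pow_R1_Rle; lra).
      assert (x * (2 ^ n - 1) * e t' <= x * (2 ^ n - 1) * (2 * e t))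
        by (apply Rmult_le_compat_l; [nra | auto]).
      unfold t' at 1; simpl. nra. }
    apply Rle_trans with (G (t' + x * e t' * (2 ^ n - 1))); [now apply tail_expR_nonincreasing|].
    apply Rle_trans with (q ^ n * G t'); [now apply IH|].
    simpl. rewrite (Rmult_comm q), Rmult_assoc.
    apply Rmult_le_compat_l; [now apply pow_le | now apply Hstep].
Qed.

Lemma gumbel_tail_dyadic_decay (m : nat) : exists x T, 0 < x /\
  forall n t, T < t -> G (t + x * e t * (2 ^ n - 1)) <= ((/ 2) ^ m) ^ n * G t.
Proof.
  set (Z := 2 ^ (m + 2)). set (x := 2 * ln Z).
  assert (HZ : 4 <= Z).
  { unfold Z. rewrite pow_add. assert (1 <= 2 ^ m) by (apply pow_R1_Rle; lra). simpl. lra. }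
  assert (HxZ : exp (x / 2) = Z)
    by (unfold x; replace (2 * ln Z / 2) with (ln Z) by field; apply exp_ln; lra).
  assert (Hx : 0 < x) by (unfold x; pose proof (ln_increasing 1 Z); rewrite ln_1 in *; lra).
  set (q := 2 * exp (- x)).
  assert (Hq0 : 0 <= q) by (unfold q; pose proof (exp_pos (- x)); lra).
  assert (HZZ : 2 * 2 ^ m <= Z * Z).
  { unfold Z. rewrite <- pow_add. replace (m + 2 + (m + 2))%nat with (S m + (m + 3))%nat by lia.
    rewrite pow_add. assert (1 <= 2 ^ (m + 3)) by (apply pow_R1_Rle; lra).
    simpl. pose proof (pow_lt 2 m). nra. }
  assert (Hq : q <= (/ 2) ^ m).
  { assert (Hex : exp (- x) = / (Z * Z))
      by (rewrite exp_Ropp, <- HxZ, <- exp_plus; do 2 f_equal; field).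
    unfold q. rewrite Hex, pow_inv.
    replace (2 * / (Z * Z)) with (/ (Z * Z / 2)) by (field; lra).
    apply Rinv_le_contravar; [apply pow_lt | ]; lra. }
  destruct (gumbel_scale_doubling x) as [T1 HT1]; [lra|].
  destruct (gumbel_tail_le x (exp (- x)) (exp_pos _)) as [T2 HT2].
  exists x, (Rmax T1 T2). split; [auto|]. intros n t Ht.
  apply Rle_trans with (q ^ n * G t).
  - apply (gumbel_tail_geometric x q (Rmax T1 T2)); auto.
    + intros s Hs. apply HT1. apply Rle_lt_trans with (Rmax T1 T2); [apply Rmax_l | auto].
    + intros s Hs. replace (q * G s) with ((exp (- x) + exp (- x)) * G s) by (unfold q; ring).
      apply HT2. apply Rle_lt_trans with (Rmax T1 T2); [apply Rmax_r | auto].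
  - apply Rmult_le_compat_r; [apply tail_expR_bounds; auto|]. apply pow_incr; lra.
Qed.

(* For [D >= x e t], take [2^n <= D / (x e t) < 2^(n+1)]: then [t + x e t (2^n - 1) <= t + D]
   and [2^(-n) < 2 x e t / D]. *)
Lemma gumbel_tail_power_bound (m : nat) : exists K T, 0 <= K /\
  forall t, T < t -> forall D, 0 < D -> G (t + D) <= K * (e t / D) ^ m * G t.
Proof.
  destruct (gumbel_tail_dyadic_decay m) as [x [T [Hx Hdecay]]].
  exists ((2 * x) ^ m), T. split; [apply pow_le; lra|].
  intros t Ht D HD. pose proof (he_pos t) as Het. pose proof (tail_expR_bounds Sbar hS t) as HGt.
  rewrite <- Rpow_mult_distr.
  assert (Hxe : 0 < x * e t) by nra.
  destruct (Rlt_dec D (x * e t)) as [Hnear | Hfar].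
  - apply Rle_trans with (G t); [apply tail_expR_nonincreasing; auto; lra|].
    assert (1 <= 2 * x * (e t / D)).
    { unfold Rdiv. apply Rmult_le_reg_r with D; [auto|].
      rewrite !Rmult_assoc, Rinv_l, Rmult_1_r by lra. nra. }
    assert (1 <= (2 * x * (e t / D)) ^ m) by (apply pow_R1_Rle; auto). nra.
  - assert (Hr : 1 <= D / (x * e t)).
    { apply Rmult_le_reg_r with (x * e t); [auto|].
      unfold Rdiv. rewrite Rmult_assoc, Rinv_l by lra. lra. }
    destruct (pow2_bracket _ Hr) as [n [Hn1 Hn2]].
    assert (Hn : t + x * e t * (2 ^ n - 1) <= t + D).
    { apply Rmult_le_compat_l with (r := x * e t) in Hn1; [|lra].
      replace (x * e t * (D / (x * e t))) with D in Hn1 by (field; lra). lra. }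
    apply Rle_trans with (G (t + x * e t * (2 ^ n - 1))); [now apply tail_expR_nonincreasing|].
    eapply Rle_trans; [now apply Hdecay|].
    rewrite <- !pow_mult, Nat.mul_comm, pow_mult.
    apply Rmult_le_compat_r; [lra|]. apply pow_incr. split; [apply pow_le; lra|].
    rewrite pow_inv. simpl in Hn2. pose proof (pow_lt 2 n).
    apply Rmult_le_reg_r with (2 ^ n * D); [nra|].
    replace (/ 2 ^ n * (2 ^ n * D)) with D by (field; lra).
    replace (2 * x * (e t / D) * (2 ^ n * D)) with (2 * 2 ^ n * (x * e t)) by (field; lra).
    apply Rmult_lt_compat_r with (r := x * e t) in Hn2; [|auto].
    replace (D / (x * e t) * (x * e t)) with D in Hn2 by (field; lra). lra.
Qed.

End Gumbel.

(** * The integral at a fixed level [u] *)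

Lemma RiemannInt_one_minus_Rpower (c q tm : R) : 0 < tm < 1 -> q + 1 <> 0 ->
  { pr : Riemann_integrable (fun th => c * Rpower (1 - th) q) 0 tm |
    RiemannInt pr = c * (1 - Rpower (1 - tm) (q + 1)) / (q + 1) }.
Proof.
  intros Htm Hq. unfold Rpower.
  set (F := fun th => - c * exp ((q + 1) * ln (1 - th)) / (q + 1)).
  assert (HI : is_RInt (fun th => c * exp (q * ln (1 - th))) 0 tm (minus (F tm) (F 0))).
  { apply (@is_RInt_derive R_CompleteNormedModule).
    - intros x Hx. rewrite Rmin_left, Rmax_right in Hx by lra.
      unfold F. auto_derive; [lra|].
      replace (1 + - x) with (1 - x) by ring.
      replace ((q + 1) * ln (1 - x)) with (q * ln (1 - x) + ln (1 - x)) by ring.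
      rewrite exp_plus, exp_ln by lra. field. split; lra.
    - intros x Hx. rewrite Rmin_left, Rmax_right in Hx by lra.
      apply (@ex_derive_continuous R_AbsRing R_NormedModule). auto_derive. lra. }
  exists (ex_RInt_Reals_0 _ _ _ (ex_intro _ _ HI)).
  rewrite <- RInt_Reals, (is_RInt_unique _ _ _ _ HI).
  unfold minus, plus, opp, F; simpl. rewrite Rminus_0_r, ln_1, Rmult_0_r, exp_0. field. auto.
Qed.

(* [exp (L / (th b)) >= w exp (eta L (1 - th) / b) >= w + w eta L (1 - th) / b]. *)
Lemma survival_at_theta_le (Sbar e : R -> R) (m : nat) (K T b L w eta lam0 th : R) :
  is_survival_of_positive_rv Sbar ->
  (forall t, T < t -> forall D, 0 < D ->
     tail_expR Sbar (t + D) <= K * (e t / D) ^ m * tail_expR Sbar t) ->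
  0 < b -> 0 < L -> 0 < w -> T < w -> 0 < eta <= 1 -> 0 < lam0 ->
  b * ln w - L <= (1 - eta) * L * lam0 -> 0 < th <= 1 - lam0 ->
  Sbar (L / (th * b)) <= K * (b * e w / (w * eta * L * (1 - th))) ^ m * tail_expR Sbar w.
Proof.
  intros hS HK Hb HL Hw HTw Heta Hlam0 Hlnw Hth.
  set (s := eta * L * (1 - th) / b).
  assert (Hs : 0 < s) by (unfold s; apply Rdiv_lt_0_compat; [apply Rmult_lt_0_compat; nra | auto]).
  assert (Hgap : ln w + s <= L / (th * b)).
  { assert (HLth : L + L * (1 - th) <= L / th).
    { apply Rmult_le_reg_r with th; [lra|].
      replace (L / th * th) with L by (field; lra).
      assert (0 <= L * ((1 - th) * (1 - th))) by (apply Rmult_le_pos; nra). nra. }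
    assert ((1 - eta) * L * lam0 <= (1 - eta) * L * (1 - th)) by (apply Rmult_le_compat_l; nra).
    apply Rmult_le_reg_r with b; [auto|]. unfold s.
    replace ((ln w + eta * L * (1 - th) / b) * b) with (b * ln w + eta * L * (1 - th))
      by (field; lra).
    replace (L / (th * b) * b) with (L / th) by (field; lra). nra. }
  assert (Hexp : w + w * s <= exp (L / (th * b))).
  { apply Rle_trans with (exp (ln w + s)); [|now apply exp_le].
    rewrite exp_plus, exp_ln by auto. pose proof (exp_ineq1_le s). nra. }
  rewrite <- tail_expR_exp by auto.
  apply Rle_trans with (tail_expR Sbar (w + w * s)); [now apply tail_expR_nonincreasing|].
  replace (b * e w / (w * eta * L * (1 - th))) with (e w / (w * s))
    by (unfold s; field; repeat split; lra).
  apply HK; [auto | nra].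
Qed.

Section IntegrandBound.
Variables (Sbar e : R -> R) (d : nat) (K T lam beta gu v w eta lam0 : R).
Hypothesis hS : is_survival_of_positive_rv Sbar.
Hypothesis HK : forall t, T < t -> forall D, 0 < D ->
  tail_expR Sbar (t + D) <= K * (e t / D) ^ d * tail_expR Sbar t.
Hypothesis HK0 : 0 <= K.
Hypothesis Hv : 0 < lam < v.
Hypothesis Hbeta : 0 < beta.
Hypothesis Hgu : 0 < gu.
Hypothesis Hw : 0 < w.
Hypothesis HTw : T < w.
Hypothesis Hew : 0 <= e w.
Hypothesis Heta : 0 < eta <= 1.
Hypothesis Hlam0 : 0 < lam0 < 1.
Hypothesis Hlnw : beta * gu * ln w - ln (v / lam) <= (1 - eta) * ln (v / lam) * lam0.

Local Notation A := (beta * gu * e w / (w * eta * ln (v / lam))).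

Lemma ln_ratio_pos : 0 < ln (v / lam).
Proof. rewrite ln_div by lra. pose proof (ln_increasing lam v). lra. Qed.

Lemma prob_rate_nondecreasing s t : 0 <= s -> s <= t ->
  0 <= prob_lam_exp_gt Sbar lam (s * beta * gu) v <= prob_lam_exp_gt Sbar lam (t * beta * gu) v.
Proof.
  intros Hs Hst. rewrite !Rmult_assoc. apply prob_lam_exp_gt_nondecreasing; auto.
  - apply Rmult_le_pos; [lra | nra].
  - apply Rmult_le_compat_r; nra.
Qed.

Lemma prob_f_dens_le th : 0 < th < 1 - lam0 ->
  Rabs (prob_lam_exp_gt Sbar lam (th * beta * gu) v * f_dens d th)
    <= dens_const d * K * A ^ d * tail_expR Sbar w * Rpower (1 - th) (dens_exp d - INR d).
Proof.
  intros Hth.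
  assert (Hb : 0 < beta * gu) by nra.
  assert (Hsurv := survival_at_theta_le Sbar e d K T (beta * gu) (ln (v / lam)) w eta lam0 th
                     hS HK Hb ln_ratio_pos Hw HTw Heta ltac:(lra) Hlnw ltac:(lra)).
  assert (Hdens := f_dens_le d th ltac:(lra)).
  assert (Hpow : (beta * gu * e w / (w * eta * ln (v / lam) * (1 - th))) ^ d
                 = A ^ d * Rpower (1 - th) (- INR d)).
  { pose proof ln_ratio_pos. rewrite Rpower_Ropp, Rpower_pow, <- pow_inv, <- Rpow_mult_distr by lra.
    f_equal. field. repeat split; lra. }
  replace (dens_exp d - INR d) with (dens_exp d + - INR d) by ring.
  rewrite Rpower_plus.
  replace (dens_const d * K * A ^ d * tail_expR Sbar w * (Rpower (1 - th) (dens_exp d)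
           * Rpower (1 - th) (- INR d)))
    with (K * (A ^ d * Rpower (1 - th) (- INR d)) * tail_expR Sbar w
          * (dens_const d * Rpower (1 - th) (dens_exp d))) by ring.
  rewrite <- Hpow, Rabs_mult.
  destruct (prob_rate_nondecreasing th th) as [Hnn _]; [lra | lra |].
  rewrite Rabs_right by lra.
  replace (th * beta * gu) with (th * (beta * gu)) by ring.
  rewrite prob_lam_exp_gt_pos_rate by (try apply Rmult_lt_0_compat; lra).
  apply Rmult_le_compat; [apply (proj1 hS) | apply Rabs_pos | auto | auto].
Qed.

(* The integrand is bounded by a multiple of [(1 - th)^(-(d+3)/2)], integrated exactly. *)
Lemma integral_prob_f_dens_le :
  exists pr : Riemann_integrable
      (fun th => prob_lam_exp_gt Sbar lam (th * beta * gu) v * f_dens d th) 0 (1 - lam0),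
    Rabs (RiemannInt pr) <=
      dens_const d * K * A ^ d
      * (Rpower lam0 (- ((INR d + 1) / 2)) / ((INR d + 1) / 2)) * tail_expR Sbar w.
Proof.
  set (C := dens_const d * K * A ^ d * tail_expR Sbar w).
  assert (HC : 0 <= C).
  { pose proof (tail_expR_bounds Sbar hS w). pose proof (dens_const_nonneg d).
    pose proof ln_ratio_pos.
    assert (0 <= A ^ d).
    { apply pow_le, Rmult_le_pos; [apply Rmult_le_pos; [nra | auto]|].
      apply Rlt_le, Rinv_0_lt_compat. repeat apply Rmult_lt_0_compat; lra. }
    unfold C. apply Rmult_le_pos; [apply Rmult_le_pos; [apply Rmult_le_pos|] |]; lra. }
  set (r := (INR d + 1) / 2).
  assert (Hr : 0 < r) by (unfold r; pose proof (pos_INR d); lra).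
  assert (Htm : 0 < 1 - lam0 < 1) by lra.
  set (pr := Riemann_integrable_mult_f_dens _ d _ Htm
               (fun s t Hs Hst _ => prob_rate_nondecreasing s t Hs Hst)).
  exists pr.
  destruct (RiemannInt_one_minus_Rpower C (dens_exp d - INR d) (1 - lam0)) as [prC HprC];
    [lra | unfold dens_exp; pose proof (pos_INR d); lra |].
  apply Rle_trans with (RiemannInt (RiemannInt_P16 pr)); [apply RiemannInt_P17; lra|].
  apply Rle_trans with (RiemannInt prC).
  { apply RiemannInt_P19; [lra|]. intros th Hth. apply prob_f_dens_le. lra. }
  rewrite HprC. replace (1 - (1 - lam0)) with lam0 by ring.
  replace (dens_exp d - INR d + 1) with (- r) by (unfold r, dens_exp; field).
  set (P := Rpower lam0 (- r)).
  replace (C * (1 - P) / - r) with (C * (P / r) - C / r) by (field; lra).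
  assert (0 <= C / r) by (apply Rmult_le_pos; [auto | apply Rlt_le, Rinv_0_lt_compat; auto]).
  apply Rle_trans with (C * (P / r)); [lra | right; unfold C; ring].
Qed.

End IntegrandBound.

Lemma Rpower_ratio_le (a eta L l lk dR : R) :
  0 < a -> 0 < eta -> 0 < lk -> 0 < l -> l / 2 <= L -> 0 <= dR ->
  Rpower (a / (eta * L)) dR * Rpower (lk / l) (- ((dR + 1) / 2))
    <= Rpower (2 / eta) dR * Rpower lk (- ((dR + 1) / 2))
       * (Rpower a dR * Rpower l (- ((dR - 1) / 2))).
Proof.
  intros Ha Heta Hlk Hl HL HdR. unfold Rpower.
  rewrite !ln_div, ln_mult by (try apply Rmult_lt_0_compat; lra).
  rewrite <- !exp_plus. apply exp_le.
  assert (ln l <= ln 2 + ln L) by (rewrite <- ln_mult by lra; apply ln_le; lra).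
  nra.
Qed.

(* [a^dR = a a^(dR-1) <= a a^((dR-1)/2)] for [a <= 1]. *)
Lemma Rpower_small_le (C a l dR eps : R) :
  0 <= C -> 0 < a <= 1 -> 0 < l -> 1 <= dR -> C * a <= eps ->
  C * (Rpower a dR * Rpower l (- ((dR - 1) / 2))) <= eps * Rpower (a / l) ((dR - 1) / 2).
Proof.
  intros HC Ha Hl HdR Hsmall. unfold Rpower. rewrite ln_div by lra.
  replace (C * (exp (dR * ln a) * exp (- ((dR - 1) / 2) * ln l)))
    with (C * a * exp ((dR - 1) * ln a - (dR - 1) / 2 * ln l))
    by (rewrite <- (exp_ln a) at 1 by lra; rewrite Rmult_assoc, <- !exp_plus; do 2 f_equal; ring).
  apply Rmult_le_compat; [nra | apply Rlt_le, exp_pos | auto |].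
  apply exp_le. assert (ln a <= 0) by (rewrite <- ln_1; apply ln_le; lra). nra.
Qed.

Section FixedLevel.
Variables (Sbar e gam : R -> R) (d : nat) (K T lam beta k : R).
Hypothesis hS : is_survival_of_positive_rv Sbar.
Hypothesis he_pos : forall t, 0 < e t.
Hypothesis HK : forall t, T < t -> forall D, 0 < D ->
  tail_expR Sbar (t + D) <= K * (e t / D) ^ d * tail_expR Sbar t.
Hypothesis HK0 : 0 <= K.
Hypothesis hd : (2 <= d)%nat.
Hypothesis hlam : 0 < lam.
Hypothesis hbeta : 0 < beta.
Hypothesis hgam : forall u, 0 < gam u.
Hypothesis hk : INR d < k.

Local Notation w u := (w_fun lam beta gam u).
Local Notation integrand u :=
  (fun theta => prob_lam_exp_gt Sbar lam (theta * beta * gam u) (u / INR d) * f_dens d theta).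

Definition level_admissible (u : R) : Prop :=
  0 < u /\ ln k < ln u /\ ln u / 2 <= ln (u / INR d / lam) /\
  ln (INR d) * ln u <= (ln k + ln (INR d)) / 2 * ln (u / INR d / lam) /\ T < w u.

Lemma ln_d_lt_ln_k : 0 < ln (INR d) < ln k.
Proof.
  assert (2 <= INR d) by (apply (le_INR 2 d) in hd; simpl in hd; lra).
  split; [rewrite <- ln_1 |]; apply ln_increasing; lra.
Qed.

(* [eta] is chosen so that [ln d <= (1 - eta) L ln k / ln u] at admissible levels. *)
Let eta : R := (ln k - ln (INR d)) / (2 * ln k).

Lemma eta_bounds : 0 < eta <= 1.
Proof.
  pose proof ln_d_lt_ln_k. unfold eta. split; [apply Rdiv_lt_0_compat; lra|].
  apply Rmult_le_reg_r with (2 * ln k); [lra|]. unfold Rdiv. rewrite Rmult_assoc, Rinv_l; lra.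
Qed.

Lemma level_admissible_margin u : level_admissible u ->
  0 < lam < u / INR d /\ 0 < ln k / ln u < 1 /\
  beta * gam u * ln (w u) - ln (u / INR d / lam) <= (1 - eta) * ln (u / INR d / lam) * (ln k / ln u).
Proof.
  intros (Hu & Hlu & Hhalf & Hcond & _). pose proof ln_d_lt_ln_k.
  assert (0 < INR d) by (apply lt_0_INR; lia).
  set (lu := ln u) in *. set (L := ln (u / INR d / lam)) in *.
  assert (HL : 0 < L) by lra.
  split; [|split].
  - split; [auto|].
    assert (H1 : 1 < u / INR d / lam).
    { apply ln_lt_inv; [lra | repeat apply Rdiv_lt_0_compat; lra | rewrite ln_1; fold L; lra]. }
    apply Rmult_lt_compat_r with (r := lam) in H1; [|auto].
    replace (u / INR d / lam * lam) with (u / INR d) in H1 by (field; lra). lra.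
  - split; [apply Rdiv_lt_0_compat; lra|].
    apply Rmult_lt_reg_r with lu; [lra|]. unfold Rdiv. rewrite Rmult_assoc, Rinv_l; lra.
  - assert (Hlnw : beta * gam u * ln (w u) - L = ln (INR d)).
    { pose proof (hgam u). unfold w_fun, Rpower, L.
      rewrite ln_exp, !ln_div by (try apply Rdiv_lt_0_compat; lra). field. nra. }
    rewrite Hlnw. replace ((1 - eta) * L * (ln k / lu)) with ((ln k + ln (INR d)) / 2 * L / lu)
      by (unfold eta; field; lra).
    apply Rmult_le_reg_r with lu; [lra|].
    replace ((ln k + ln (INR d)) / 2 * L / lu * lu) with ((ln k + ln (INR d)) / 2 * L)
      by (field; lra).
    lra.
Qed.

Lemma integral_prob_f_dens_le_at_level : exists C, 0 <= C /\ forall u, level_admissible u ->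
  exists pr : Riemann_integrable (integrand u) 0 (1 - ln k / ln u),
    Rabs (RiemannInt pr) <=
      C * (Rpower (beta * gam u * e (w u) / w u) (INR d) * Rpower (ln u) (- ((INR d - 1) / 2)))
      * tail_expR Sbar (w u).
Proof.
  pose proof ln_d_lt_ln_k. pose proof eta_bounds.
  set (r := (INR d + 1) / 2).
  assert (Hr : 0 < r) by (unfold r; pose proof (pos_INR d); lra).
  set (C := dens_const d * K / r).
  assert (HC : 0 <= C).
  { pose proof (dens_const_nonneg d).
    apply Rmult_le_pos; [nra | apply Rlt_le, Rinv_0_lt_compat; lra]. }
  exists (C * (Rpower (2 / eta) (INR d) * Rpower (ln k) (- r))).
  split; [apply Rmult_le_pos; [auto | apply Rmult_le_pos; apply Rlt_le, exp_pos]|].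
  intros u Hadm. destruct (level_admissible_margin u Hadm) as (Hv & Hlam0 & Hmargin).
  destruct Hadm as (Hu & Hlu & Hhalf & _ & HTw).
  set (w := w_fun lam beta gam u) in *.
  assert (Hw : 0 < w) by apply exp_pos.
  destruct (integral_prob_f_dens_le Sbar e d K T lam beta (gam u) (u / INR d) w eta (ln k / ln u)
              hS HK HK0 Hv hbeta (hgam u) Hw HTw (Rlt_le _ _ (he_pos w)) eta_bounds Hlam0 Hmargin)
    as [pr Hpr].
  exists pr. eapply Rle_trans; [exact Hpr|]. fold r.
  pose proof (tail_expR_bounds Sbar hS w). pose proof (he_pos w). pose proof (hgam u).
  set (L := ln (u / INR d / lam)) in *.
  set (a := beta * gam u * e w / w).
  assert (Ha : 0 < a) by (apply Rdiv_lt_0_compat; [apply Rmult_lt_0_compat; nra | auto]).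
  replace (beta * gam u * e w / (w * eta * L)) with (a / (eta * L)) by (unfold a; field; lra).
  rewrite <- Rpower_pow by (apply Rdiv_lt_0_compat; [auto | apply Rmult_lt_0_compat; lra]).
  replace (dens_const d * K * Rpower (a / (eta * L)) (INR d) * (Rpower (ln k / ln u) (- r) / r))
    with (C * (Rpower (a / (eta * L)) (INR d) * Rpower (ln k / ln u) (- r)))
    by (unfold C; field; lra).
  apply Rmult_le_compat_r; [lra|]. rewrite Rmult_assoc. apply Rmult_le_compat_l; [auto|].
  apply Rpower_ratio_le; try lra. apply pos_INR.
Qed.

Lemma target_as_tail u : 0 < u -> 0 < ln u ->
  Rabs (Rpower (e_star e lam beta gam u / (u * ln u)) ((INR d - 1) / 2)
        * prob_lam_exp_gt Sbar lam (beta * gam u) u)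
  = Rpower (beta * gam u * e (w u) / w u / ln u) ((INR d - 1) / 2) * tail_expR Sbar (w u).
Proof.
  intros Hu Hlu. pose proof (hgam u). pose proof (tail_expR_bounds Sbar hS (w u)).
  assert (Hw : 0 < w u) by apply exp_pos.
  rewrite prob_lam_exp_gt_as_tail by (try apply Rmult_lt_0_compat; lra). fold (w u).
  replace (e_star e lam beta gam u / (u * ln u)) with (beta * gam u * e (w u) / w u / ln u)
    by (unfold e_star; field; lra).
  rewrite Rabs_right; [auto|]. apply Rle_ge, Rmult_le_pos; [apply Rlt_le, exp_pos | lra].
Qed.

Lemma integral_prob_f_dens_le_eps (B : R) : 0 < B -> forall eps, 0 < eps ->
  exists delta, 0 < delta /\ forall u, level_admissible u -> beta * gam u <= B ->
    e (w u) <= delta * w u ->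
    exists pr : Riemann_integrable (integrand u) 0 (1 - ln k / ln u),
      Rabs (RiemannInt pr) <=
        eps * Rabs (Rpower (e_star e lam beta gam u / (u * ln u)) ((INR d - 1) / 2)
                    * prob_lam_exp_gt Sbar lam (beta * gam u) u).
Proof.
  intros HB eps Heps.
  destruct integral_prob_f_dens_le_at_level as [C [HC Hlevel]].
  set (delta0 := Rmin 1 (eps / (C + 1))).
  assert (Hdelta0 : 0 < delta0) by (apply Rmin_pos; [lra | apply Rdiv_lt_0_compat; lra]).
  exists (delta0 / B). split; [now apply Rdiv_lt_0_compat|].
  intros u Hadm HbB Hew.
  destruct (Hlevel u Hadm) as [pr Hpr]. exists pr. eapply Rle_trans; [exact Hpr|].
  destruct Hadm as (Hu & Hlu & _).
  assert (Hlnu : 0 < ln u) by (pose proof ln_d_lt_ln_k; lra).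
  rewrite target_as_tail by auto.
  set (a := beta * gam u * e (w u) / w u).
  assert (Hw : 0 < w u) by apply exp_pos.
  assert (Ha : 0 < a) by (pose proof (hgam u); pose proof (he_pos (w u));
                          apply Rdiv_lt_0_compat; [repeat apply Rmult_lt_0_compat|]; lra).
  assert (Hadelta : a <= delta0).
  { apply Rmult_le_reg_r with (w u); [auto|]. unfold a, Rdiv.
    rewrite Rmult_assoc, Rinv_l, Rmult_1_r by lra.
    pose proof (he_pos (w u)).
    apply Rle_trans with (B * e (w u)); [apply Rmult_le_compat_r; lra|].
    replace (delta0 * w u) with (B * (delta0 / B * w u)) by (field; lra).
    apply Rmult_le_compat_l; lra. }
  pose proof (tail_expR_bounds Sbar hS (w u)).
  rewrite <- (Rmult_assoc eps). apply Rmult_le_compat_r; [lra|].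
  apply Rpower_small_le; auto.
  - split; [auto | apply Rle_trans with delta0; [auto | apply Rmin_l]].
  - pose proof (le_INR 2 d hd); simpl in *; lra.
  - apply Rle_trans with (C * (eps / (C + 1))).
    + apply Rmult_le_compat_l; [auto | apply Rle_trans with delta0; [auto | apply Rmin_r]].
    + apply Rmult_le_reg_r with (C + 1); [lra|].
      replace (C * (eps / (C + 1)) * (C + 1)) with (C * eps) by (field; lra). nra.
Qed.

End FixedLevel.


(** * Asymptotics in [u] *)

Lemma eventually_ln_gt (M : R) : Rbar_locally p_infty (fun u => 0 < u /\ M < ln u).
Proof.
  exists (exp M). intros u Hu. pose proof (exp_pos M).
  split; [lra|]. rewrite <- (ln_exp M) at 1. apply ln_increasing; lra.
Qed.

Lemma eventually_log_conditions (lam dR k : R) : 0 < lam -> 1 < dR < k ->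
  Rbar_locally p_infty (fun u => 0 < u /\ ln k < ln u /\ ln u / 2 <= ln (u / dR / lam) /\
    ln dR * ln u <= (ln k + ln dR) / 2 * ln (u / dR / lam)).
Proof.
  intros Hlam Hk. set (ld := ln dR). set (lk := ln k). set (c := ld + ln lam).
  assert (Hld : 0 < ld) by (unfold ld; rewrite <- ln_1; apply ln_increasing; lra).
  assert (Hlk : ld < lk) by (apply ln_increasing; lra).
  apply (filter_imp (fun u =>
    0 < u /\ Rmax lk (Rmax (2 * Rabs c) ((lk + ld) * Rabs c / (lk - ld))) < ln u));
    [|apply eventually_ln_gt].
  intros u [Hu HM]. apply Rmax_Rlt in HM as [Hlu HM]. apply Rmax_Rlt in HM as [Hc1 Hc2].
  assert (HL : ln (u / dR / lam) = ln u - c)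
    by (unfold c, ld; rewrite !ln_div by (try apply Rdiv_lt_0_compat; lra); ring).
  pose proof (Rle_abs c).
  rewrite HL. repeat split; [auto | auto | lra |].
  assert ((lk + ld) * Rabs c <= (lk - ld) * ln u).
  { apply Rmult_lt_compat_r with (r := lk - ld) in Hc2; [|lra].
    replace ((lk + ld) * Rabs c / (lk - ld) * (lk - ld)) with ((lk + ld) * Rabs c) in Hc2
      by (field; lra).
    lra. }
  assert ((lk + ld) * c <= (lk + ld) * Rabs c) by (apply Rmult_le_compat_l; lra).
  lra.
Qed.

Lemma eventually_w_fun_gt (gam : R -> R) (lam beta B W : R) : 0 < lam -> 0 < B ->
  Rbar_locally p_infty (fun u => 0 < beta * gam u <= B) ->
  Rbar_locally p_infty (fun u => W < w_fun lam beta gam u).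
Proof.
  intros Hlam HB Hb. set (W' := Rmax 1 W).
  assert (HW' : 1 <= W') by apply Rmax_l.
  assert (HlnW' : 0 <= ln W') by (rewrite <- ln_1; apply ln_le; lra).
  apply (filter_imp (fun u => 0 < beta * gam u <= B /\ 0 < u /\ ln lam + B * ln W' < ln u));
    [|apply filter_and; [exact Hb | apply eventually_ln_gt]].
  intros u [Hbu [Hu Hlu]].
  assert (Hlnul : B * ln W' < ln (u / lam)) by (rewrite ln_div; lra).
  apply Rle_lt_trans with W'; [apply Rmax_r|].
  unfold w_fun, Rpower. rewrite <- (exp_ln W') by lra. apply exp_increasing.
  apply Rlt_le_trans with (ln (u / lam) / B).
  - apply Rmult_lt_reg_r with B; [lra|]. unfold Rdiv. rewrite Rmult_assoc, Rinv_l; lra.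
  - unfold Rdiv. rewrite Rmult_1_l, (Rmult_comm (/ _)).
    apply Rmult_le_compat_l; [nra|]. apply Rinv_le_contravar; lra.
Qed.

Theorem mainTheorem6
  (d : nat) (hd : (2 <= d)%nat)
  (S : R -> R) (hS : is_survival_of_positive_rv S)
  (hinf : infinite_upper_endpoint_expR S)
  (e : R -> R) (he_pos : forall t, 0 < e t) (hgum : gumbel_MDA_expR S e)
  (lam beta : R) (hlam : 0 < lam) (hbeta : 0 < beta)
  (gam : R -> R) (hgam_pos : forall u, 0 < gam u)
  (gamma : R) (hgamma : 0 < gamma)
  (hgam_lim : forall eps, 0 < eps -> exists U, forall u, U < u -> Rabs (gam u - gamma) < eps)
  (k : R) (hk : INR d < k) :
  forall eps, 0 < eps -> exists U, forall u, U < u ->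
    exists pr : Riemann_integrable
        (fun theta => prob_lam_exp_gt S lam (theta * beta * gam u) (u / INR d)
                      * f_dens d theta)
        0 (1 - ln k / ln u),
      Rabs (RiemannInt pr) <=
        eps * Rabs (Rpower (e_star e lam beta gam u / (u * ln u)) ((INR d - 1) / 2)
                    * prob_lam_exp_gt S lam (beta * gam u) u).
Proof.
  intros eps Heps.
  destruct (gumbel_tail_power_bound S e hS hinf hgum he_pos d) as [K [T [HK0 HK]]].
  set (B := 2 * beta * gamma).
  assert (HB : 0 < B) by (unfold B; nra).
  destruct (integral_prob_f_dens_le_eps S e gam d K T lam beta k hS he_pos HK HK0 hd hlam hbeta
              hgam_pos hk B HB eps Heps) as [delta [Hdelta Hlevel]].
  destruct (gumbel_scale_little_o S e hS hinf hgum delta Hdelta) as [Te HTe].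
  assert (Hb : Rbar_locally p_infty (fun u => 0 < beta * gam u <= B)).
  { apply (filter_imp (fun u => Rabs (gam u - gamma) < gamma)); [|now apply hgam_lim].
    intros u Hu. apply Rabs_def2 in Hu. pose proof (hgam_pos u). unfold B. split; nra. }
  assert (HdR : 1 < INR d < k) by (pose proof (le_INR 2 d hd); simpl in *; lra).
  eapply (@filter_imp R (Rbar_locally p_infty) _);
    [|apply filter_and; [apply (eventually_w_fun_gt gam lam beta B (Rmax T Te) hlam HB Hb) |
                         apply (filter_and _ _ Hb (eventually_log_conditions lam _ k hlam HdR))]].
  intros u [Hw [Hbu (Hu & Hlu & Hhalf & Hcond)]]. apply Rmax_Rlt in Hw as [HwT HwTe].
  apply Hlevel; [repeat split; auto | apply Hbu | now apply HTe].
Qed.
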